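(* Let $X_1,\dots,X_n$ be mutually independent random variables with given distributions on ranges $D_1,\dots,D_n$ and product distribution $\mu$, and let $A_1,\dots,A_m$ be arbitrary events, $A_i$ determined by the variables indexed by $\mathrm{vbl}(A_i)\subseteq[n]$. Run the General Partial Rejection Sampling algorithm: draw all variables independently; while at least one $A_i$ occurs under the current assignment $\sigma$, compute $\mathrm{Res}(\sigma)$ and independently resample all variables in $\bigcup_{i\in\mathrm{Res}(\sigma)}\mathrm{vbl}(A_i)$; when no $A_i$ occurs, output the current assignment. If the algorithm halts, its output is distributed as $\mu$ conditioned on $\bigwedge_{i=1}^m\overline{A_i}$.
   Context: Dependency graph $G$ on $[m]$: distinct $i,j$ adjacent iff $\mathrm{vbl}(A_i)\cap\mathrm{vbl}(A_j)\neq\emptyset$. Notation: $\mathrm{Bad}(\sigma)=\{i:\sigma\in A_i\}$; $\partial S=\{i\notin S: i\text{ adjacent to some }j\in S\}$; $\mathrm{vbl}(S)=\bigcup_{i\in S}\mathrm{vbl}(A_i)$. We write $A_i\cap\sigma_S=\emptyset$ if either $\mathrm{vbl}(A_i)\cap\mathrm{vbl}(S)=\emptyset$ or no assignment agreeing with $\sigma$ on $\mathrm{vbl}(A_i)\cap\mathrm{vbl}(S)$ belongs to $A_i$; otherwise $A_i\cap\sigma_S\ne\emptyset$. $\mathrm{Res}(\sigma)$ is the output of: start with $R=\mathrm{Bad}(\sigma)$, $N=\emptyset$; while $\partial R\setminus N\neq\emptyset$, for each $i\in\partial R\setminus N$ (with $R$ the current set) put $i$ into $R$ if $A_i\cap\sigma_R\ne\emptyset$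 and into $N$ otherwise; output $R$. *)

From mathcomp Require Import all_boot all_order all_algebra.
Unset Printing Implicit Defensive.
Import Order.TTheory GRing.Theory Num.Theory.
Local Open Scope ring_scope.

Section PRS.
Variables (R : realFieldType) (n m : nat) (D : 'I_n -> finType).

Definition assignment := {dffun forall k : 'I_n, D k}.

Variables (p : forall k : 'I_n, D k -> R)
          (A : 'I_m -> {set assignment}) (vbl : 'I_m -> {set 'I_n}).

Definition mu (s : assignment) : R := \prod_(k < n) p k (s k).

Definition adj (i j : 'I_m) : bool := (i != j) && (vbl i :&: vbl j != set0).

Definition Bad (s : assignment) : {set 'I_m} := [set i | s \in A i].

Definition bdry (S : {set 'I_m}) : {set 'I_m} :=
  [set i | (i \notin S) && [exists j in S, adj i j]].

Definition vblS (S : {set 'I_m}) : {set 'I_n} := \bigcup_(i in S) vbl i.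

Definition agree_on (V : {set 'I_n}) (s t : assignment) : bool :=
  [forall k in V, s k == t k].

Definition meets (s : assignment) (i : 'I_m) (S : {set 'I_m}) : bool :=
  (vbl i :&: vblS S != set0) &&
  [exists t, (t \in A i) && agree_on (vbl i :&: vblS S) s t].

(* one pass of the inner for-loop: the elements of bdry R :\: N are processed
   in increasing index order, R and N being updated as we go *)
Definition res_step (s : assignment) (RN : {set 'I_m} * {set 'I_m}) (i : 'I_m) :=
  if meets s i RN.1 then (i |: RN.1, RN.2) else (RN.1, i |: RN.2).

Definition res_round (s : assignment) (RN : {set 'I_m} * {set 'I_m}) :=
  if bdry RN.1 :\: RN.2 != set0
  then foldl (res_step s) RN (enum (bdry RN.1 :\: RN.2))
  else RN.

(* each nontrivial round enlarges R :|: N, so m.+1 rounds reach the fixpoint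
   where the while-loop exits *)
Definition Res (s : assignment) : {set 'I_m} :=
  (iter m.+1 (res_round s) (Bad s, set0)).1.

(* one step of the algorithm: if some A_i occurs, resample vbl(Res s);
   otherwise stop (the state is absorbing) *)
Definition kernel (s t : assignment) : R :=
  if Bad s == set0 then (s == t)%:R
  else let V := vblS (Res s) in
       (agree_on (~: V) s t)%:R * \prod_(k in V) p k (t k).

Fixpoint state_dist (t : nat) : assignment -> R :=
  match t with
  | 0 => mu
  | t'.+1 => fun y => \sum_x state_dist t' x * kernel x y
  end.

Definition good (s : assignment) : bool := Bad s == set0.

End PRS.

From mathcomp Require Import all_boot all_order all_algebra.
From mathcomp Require Import perm ring.
Import GRing.Theory Num.Theory.
Set Implicit Arguments.
Unset Strict Implicit.
Unset Printing Implicit Defensive.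

(* Write mu_W(z) for the product of the weights of z on the variables in W,
   and call y, y' W-exchangeable when they agree outside W and every event
   depending on a variable of W is avoided by both.  By induction on t, the
   distribution nu_t of the state after t rounds satisfies
   nu_t(y) mu_W(y') = nu_t(y') mu_W(y) for W-exchangeable y, y'.  In the
   inductive step, a resampling transition x -> y is matched with x' -> y',
   where x' agrees with x on V = vbl(Res x) and is obtained outside V by
   transposing the values of y and y' (an involution, hence a reindexing).
   The loop computing Res x only inspects x on V and leaves every event that
   touches V from outside Res x blocked by the values on V, so Res x' = Res x
   and x, x' are (W \ V)-exchangeable: the induction hypothesis applies.
   Two good assignments are exchangeable on all variables, so nu_t restricted
   to good assignments is proportional to mu. *)

Section PartialRejectionSampling.
Variables (n m : nat) (D : 'I_n -> finType).
Variables (A : 'I_m -> {set assignment n D}) (vbl : 'I_m -> {set 'I_n}).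

Local Notation asg := (assignment n D).
Local Notation agree := (agree_on n D).
Local Notation Bad := (Bad n m D A).
Local Notation Res := (Res n m D A vbl).
Local Notation bdry := (bdry n m vbl).
Local Notation vblS := (vblS n m vbl).
Local Notation meets := (meets n m D A vbl).
Local Notation res_step := (res_step n m D A vbl).
Local Notation res_round := (res_round n m D A vbl).

Lemma agree_onP (V : {set 'I_n}) (s t : asg) :
  reflect (forall k, k \in V -> s k = t k) (agree V s t).
Proof. by apply: (iffP forall_inP) => st k /st => [/eqP|->]. Qed.
Arguments agree_onP {V s t}.

Lemma agree_on_sym (V : {set 'I_n}) (s t : asg) : agree V s t = agree V t s.
Proof. by apply: eq_forallb => k; rewrite eq_sym. Qed.

Lemma mem_vblS (S : {set 'I_m}) i k : i \in S -> k \in vbl i -> k \in vblS S.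
Proof. by move=> iS ki; apply/bigcupP; exists i. Qed.

Lemma vblS_sub (S1 S2 : {set 'I_m}) : S1 \subset S2 -> vblS S1 \subset vblS S2.
Proof.
by move=> sub; apply/bigcupsP => i iS1; apply: bigcup_sup; apply: (subsetP sub).
Qed.

Definition pair_sub (RN RN' : {set 'I_m} * {set 'I_m}) :=
  (RN.1 \subset RN'.1) && (RN.2 \subset RN'.2).

Lemma pair_sub_refl RN : pair_sub RN RN.
Proof. by rewrite /pair_sub !subxx. Qed.

Lemma pair_sub_trans RN1 RN2 RN3 :
  pair_sub RN1 RN2 -> pair_sub RN2 RN3 -> pair_sub RN1 RN3.
Proof.
move=> /andP[s1 s2] /andP[s3 s4].
by rewrite /pair_sub (subset_trans s1 s3) (subset_trans s2 s4).
Qed.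

Lemma foldl_step_grows s l RN : pair_sub RN (foldl (res_step s) RN l).
Proof.
elim: l RN => [|i l IH] RN /=; first exact: pair_sub_refl.
apply: pair_sub_trans (IH _); rewrite /res_step /pair_sub.
by case: ifP => _ /=; rewrite !subsetUr !subxx.
Qed.

Lemma res_round_grows s RN : pair_sub RN (res_round s RN).
Proof.
by rewrite /res_round; case: ifP => _; [apply: foldl_step_grows | apply: pair_sub_refl].
Qed.

Definition res_iter (s : asg) k := iter k (res_round s) (Bad s, set0).

Lemma res_iter_grows s k j : k <= j -> pair_sub (res_iter s k) (res_iter s j).
Proof.
move=> /subnKC <-; elim: (j - k) => [|d IH]; first by rewrite addn0 pair_sub_refl.
by rewrite addnS /res_iter iterS; apply: pair_sub_trans IH (res_round_grows _ _).
Qed.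

Lemma res_iter_sub_Res s k : k <= m.+1 -> (res_iter s k).1 \subset Res s.
Proof. by move=> /(res_iter_grows s) /andP[]. Qed.

Lemma Bad_sub_Res s : Bad s \subset Res s.
Proof. exact: (@res_iter_sub_Res s 0). Qed.

Lemma meets_local s s' i (R S : {set 'I_m}) : R \subset S ->
  agree (vblS S) s s' -> meets s i R = meets s' i R.
Proof.
move=> RS /agree_onP ss'; rewrite /meets; congr (_ && _); apply: eq_existsb => t.
congr (_ && _); apply: eq_forallb => k; apply: implyb_id2l.
rewrite inE => /andP[_ kR].
by rewrite ss' //; apply: (subsetP (vblS_sub RS)).
Qed.

Lemma foldl_step_local s s' l RN (S : {set 'I_m}) :
  (foldl (res_step s) RN l).1 \subset S -> agree (vblS S) s s' ->
  foldl (res_step s) RN l = foldl (res_step s') RN l.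
Proof.
move=> + ss'; elim: l RN => [|i l IH] RN //= sub.
have /andP[+ _] := foldl_step_grows s l (res_step s RN i).
move=> /subset_trans/(_ sub) stepS; have RNS : RN.1 \subset S.
  by apply: subset_trans stepS; rewrite /res_step; case: ifP => _; rewrite ?subsetUr.
have -> : res_step s' RN i = res_step s RN i.
  by rewrite /res_step (meets_local i RNS ss').
exact: IH.
Qed.

Lemma Res_local s s' : Bad s = Bad s' -> agree (vblS (Res s)) s s' -> Res s' = Res s.
Proof.
move=> Bss' ss'; suff iter_eq k : k <= m.+1 -> res_iter s k = res_iter s' k.
  by move: (iter_eq _ (leqnn m.+1)); rewrite /Res /res_iter => ->.
elim: k => [|k IH] km; first by rewrite /res_iter /= Bss'.
rewrite /res_iter !iterS -/(res_iter s k) -/(res_iter s' k) -IH ?(ltnW km) //.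
have := res_iter_sub_Res s km; rewrite /res_iter iterS /res_round.
by case: ifP => // _ sub; apply: foldl_step_local sub ss'.
Qed.

Definition blocked s (RN : {set 'I_m} * {set 'I_m}) :=
  forall i, i \in RN.2 -> forall z, agree (vblS RN.1) s z -> z \notin A i.

Lemma vbl_meets_vblS i j (S : {set 'I_m}) :
  j \in S -> vbl i :&: vbl j != set0 -> vbl i :&: vblS S != set0.
Proof.
move=> jS /set0Pn[k]; rewrite inE => /andP[ki kj].
by apply/set0Pn; exists k; rewrite inE ki (mem_vblS jS kj).
Qed.

Lemma res_step_blocked s (R0 : {set 'I_m}) RN i : blocked s RN ->
  R0 \subset RN.1 -> i \in bdry R0 -> blocked s (res_step s RN i).
Proof.
move=> RNb R0RN; rewrite inE => /andP[_ /exists_inP[j jR0 /andP[_ ij]]].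
rewrite /res_step; case: ifP => [_ | not_meets] i' /=.
  move=> /RNb i'b z /agree_onP sz; apply: i'b; apply/agree_onP => k kRN.
  by apply: sz; apply: (subsetP (vblS_sub (subsetUr _ _))).
rewrite in_setU1 => /predU1P[-> {i'} | /RNb //] z /agree_onP sz.
move: not_meets; rewrite /meets (vbl_meets_vblS (subsetP R0RN _ jR0) ij) /=.
move=> /negbT; rewrite negb_exists => /forallP/(_ z); rewrite negb_and.
case/orP => // /negP[]; apply/forall_inP => k; rewrite inE => /andP[_ kRN].
by rewrite sz.
Qed.

Lemma foldl_step_blocked s (R0 : {set 'I_m}) l RN : blocked s RN ->
  R0 \subset RN.1 -> {subset l <= bdry R0} -> blocked s (foldl (res_step s) RN l).
Proof.
elim: l RN => [|i l IH] RN //= RNb R0RN lb; apply: IH => [||j jl]; last 1 first.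
- by apply: lb; rewrite inE jl orbT.
- by apply: res_step_blocked RNb R0RN (lb _ (mem_head _ _)).
- by have /andP[+ _] := foldl_step_grows s [:: i] RN; apply: subset_trans.
Qed.

Lemma res_round_blocked s RN : blocked s RN -> blocked s (res_round s RN).
Proof.
rewrite /res_round; case: ifP => // _ RNb; apply: foldl_step_blocked RNb (subxx _) _.
by move=> i; rewrite mem_enum inE => /andP[].
Qed.

Lemma res_iter_blocked s k : blocked s (res_iter s k).
Proof.
elim: k => [|k IH]; first by move=> i; rewrite inE.
by rewrite /res_iter iterS; apply: res_round_blocked.
Qed.

Lemma mem_foldl_step s l RN i : i \in l ->
  i \in (foldl (res_step s) RN l).1 :|: (foldl (res_step s) RN l).2.
Proof.
elim: l RN => [|j l IH] RN //=; rewrite inE => /predU1P[-> | /IH //].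
have /andP[sub1 sub2] := foldl_step_grows s l (res_step s RN j).
apply: subsetP (setUSS sub1 sub2) _ _.
by rewrite /res_step; case: ifP => _; rewrite !inE eqxx ?orbT.
Qed.

Lemma res_round_card s (RN : {set 'I_m} * {set 'I_m}) :
  ~~ (bdry RN.1 \subset RN.2) ->
  #|RN.1 :|: RN.2| < #|(res_round s RN).1 :|: (res_round s RN).2|.
Proof.
rewrite -setD_eq0 /res_round => /[dup] new ->; apply/proper_card/properP; split.
  by have /andP[sub1 sub2] := foldl_step_grows s (enum (bdry RN.1 :\: RN.2)) RN;
     apply: setUSS.
have [i iD] := set0Pn _ new; exists i.
  by apply: mem_foldl_step; rewrite mem_enum.
by move: iD; rewrite !inE negb_or => /andP[-> /andP[-> _]].
Qed.

Lemma res_round_stable s (RN : {set 'I_m} * {set 'I_m}) :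
  bdry RN.1 \subset RN.2 -> res_round s RN = RN.
Proof. by rewrite /res_round -setD_eq0 => ->. Qed.

Lemma res_iter_stable s : bdry (res_iter s m.+1).1 \subset (res_iter s m.+1).2.
Proof.
suff : forall k, bdry (res_iter s k).1 \subset (res_iter s k).2 \/
                 k <= #|(res_iter s k).1 :|: (res_iter s k).2|.
  by case/(_ m.+1) => // /leq_trans/(_ (max_card _)); rewrite card_ord ltnn.
elim=> [|k IH]; first by right.
rewrite /res_iter iterS -/(res_iter s k).
have [st | nst] := boolP (bdry (res_iter s k).1 \subset (res_iter s k).2).
  by left; rewrite res_round_stable.
case: IH => [st | IH]; first by rewrite st in nst.
by right; apply: leq_ltn_trans IH (res_round_card s nst).
Qed.

Lemma Res_blocks s i z : i \notin Res s -> vbl i :&: vblS (Res s) != set0 ->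
  agree (vblS (Res s)) s z -> z \notin A i.
Proof.
move=> iR /set0Pn[k] /setIP[ki /bigcupP[j jR kj]].
apply: (@res_iter_blocked s m.+1); apply: (subsetP (res_iter_stable s)).
rewrite inE iR; apply/exists_inP; exists j => //; apply/andP; split.
  by apply: contraNneq iR => ->.
by apply/set0Pn; exists k; rewrite inE ki kj.
Qed.

Lemma agree_on_refl (V : {set 'I_n}) (s : asg) : agree V s s.
Proof. by apply/agree_onP. Qed.

Lemma agree_on_sub (V1 V2 : {set 'I_n}) (s t : asg) :
  V1 \subset V2 -> agree V2 s t -> agree V1 s t.
Proof. by move=> /subsetP V12 /agree_onP st; apply/agree_onP => k /V12 /st. Qed.

Hypothesis A_det : forall (i : 'I_m) (s t : asg),
  (forall k, k \in vbl i -> s k = t k) -> (s \in A i) = (t \in A i).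

Lemma A_agree i (s t : asg) : agree (vbl i) s t -> (s \in A i) = (t \in A i).
Proof. by move/agree_onP; apply: A_det. Qed.

Definition exchangeable (W : {set 'I_n}) (y y' : asg) :=
  agree (~: W) y y' /\
  forall i, vbl i :&: W != set0 -> (y \notin A i) && (y' \notin A i).

Lemma exchangeable_sym W y y' : exchangeable W y y' -> exchangeable W y' y.
Proof.
by case=> yy' yAy'; split=> [|i /yAy']; rewrite 1?agree_on_sym // andbC.
Qed.

Lemma exchangeable_Bad W y y' : exchangeable W y y' -> Bad y = Bad y'.
Proof.
case=> yy' yAy'; apply/setP => i; rewrite !inE.
have [/yAy' /andP[/negbTE -> /negbTE ->] // | ] := boolP (vbl i :&: W != set0).
rewrite negbK setI_eq0 disjoints_subset => iW.
exact: A_agree (agree_on_sub iW yy').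
Qed.

Definition swap_off (V : {set 'I_n}) (y y' x : asg) : asg :=
  [ffun k => if k \in V then x k else tperm (y k) (y' k) (x k)].

Lemma swap_offK V y y' : involutive (swap_off V y y').
Proof.
by move=> x; apply/ffunP => k; rewrite !ffunE; case: (k \in V); rewrite ?tpermK.
Qed.

Lemma agree_swap_off_in V y y' x : agree V x (swap_off V y y' x).
Proof. by apply/agree_onP => k kV; rewrite ffunE kV. Qed.

Lemma agree_swap_off V y y' x :
  agree (~: V) (swap_off V y y' x) y' = agree (~: V) x y.
Proof.
apply: eq_forallb => k; apply: implyb_id2l; rewrite inE ffunE => /negbTE ->.
by rewrite -{2}(tpermL (y k) (y' k)) (inj_eq perm_inj).
Qed.

Section ResampleExchange.
Variables (W : {set 'I_n}) (y y' x x' : asg).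
Hypothesis yy' : exchangeable W y y'.
Let V := vblS (Res x).
Hypotheses (xy : agree (~: V) x y) (xx' : agree V x x') (x'y' : agree (~: V) x' y').

Lemma outside_Res_avoided i : i \notin Res x -> (x \notin A i) && (x' \notin A i).
Proof.
move=> iR; have [meetV | ] := boolP (vbl i :&: V != set0).
  by rewrite !(Res_blocks iR meetV) ?agree_on_refl.
rewrite negbK setI_eq0 disjoints_subset => iV.
have -> : x \notin A i.
  by apply: contra iR => xAi; apply: (subsetP (Bad_sub_Res x)); rewrite inE.
rewrite (A_agree (agree_on_sub iV x'y')) /=.
have [meetW | ] := boolP (vbl i :&: W != set0); first by case/andP: (yy'.2 _ meetW).
rewrite negbK setI_eq0 disjoints_subset => iW.
rewrite -(A_agree (agree_on_sub iW yy'.1)) -(A_agree (agree_on_sub iV xy)).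
by apply: contra iR => xAi; apply: (subsetP (Bad_sub_Res x)); rewrite inE.
Qed.

Lemma resample_exchange :
  [/\ Bad x' = Bad x, Res x' = Res x & exchangeable (W :\: V) x x'].
Proof.
have vbl_sub_V i : i \in Res x -> vbl i \subset V by move=> iR; apply: bigcup_sup.
have eBad : Bad x' = Bad x.
  apply/setP => i; rewrite !inE; have [iR | iR] := boolP (i \in Res x).
    by rewrite (A_agree (agree_on_sub (vbl_sub_V i iR) xx')).
  by case/andP: (outside_Res_avoided iR) => /negbTE -> /negbTE ->.
split => //; first by apply: Res_local.
split.
  apply/agree_onP => k; rewrite !inE negb_and negbK.
  have [kV _ | kV /= kW] := boolP (k \in V); first exact: (agree_onP xx').
  rewrite (agree_onP xy) ?inE // (agree_onP yy'.1) ?inE //.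
  by rewrite (agree_onP x'y') ?inE.
move=> i /set0Pn[k] /setIP[ki]; rewrite inE => /andP[kV _].
by apply: outside_Res_avoided; apply: contra kV => /vbl_sub_V/subsetP; apply.
Qed.

End ResampleExchange.

Lemma resample_cond W y y' x x' (S : {set 'I_m}) : exchangeable W y y' ->
  agree (~: vblS S) x y -> agree (vblS S) x x' -> agree (~: vblS S) x' y' ->
  (Bad x != set0) && (Res x == S) = (Bad x' != set0) && (Res x' == S).
Proof.
move=> yy' xy xx' x'y'; apply/andP/andP => -[bad /eqP RS]; subst S.
  by have [-> -> _] := resample_exchange yy' xy xx' x'y'.
rewrite agree_on_sym in xx'.
by have [-> -> _] := resample_exchange (exchangeable_sym yy') x'y' xx' xy.
Qed.

Lemma exchangeable_good y y' :
  Bad y = set0 -> Bad y' = set0 -> exchangeable setT y y'.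
Proof.
have avoids z i : Bad z = set0 -> z \notin A i by move/setP/(_ i); rewrite !inE => ->.
move=> gy gy'; split; first by apply/agree_onP => k; rewrite setCT inE.
by move=> i _; rewrite !avoids.
Qed.

Local Open Scope ring_scope.

Variables (R : realFieldType) (p : forall k : 'I_n, D k -> R).
Arguments p : clear implicits.

Local Notation mu := (mu R n D p).
Local Notation nu := (state_dist R n m D p A vbl).

Definition mu_on (W : {set 'I_n}) (z : asg) : R := \prod_(k in W) p k (z k).

Lemma mu_on_eq W z z' : agree W z z' -> mu_on W z = mu_on W z'.
Proof. by move=> /agree_onP zz'; apply: eq_bigr => k /zz' ->. Qed.

Lemma mu_on_split W V z : mu_on W z = mu_on (W :&: V) z * mu_on (W :\: V) z.
Proof. exact: big_setID. Qed.

Lemma mu_splitC W z : mu z = mu_on W z * mu_on (~: W) z.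
Proof.
rewrite /mu (bigID (mem W)) /=; congr (_ * _); apply: eq_bigl => k; by rewrite inE.
Qed.

Lemma mu_on_resample W V y y' x x' (a b : R) :
  agree (~: W) y y' -> agree (~: V) x y -> agree (~: V) x' y' ->
  a * mu_on (W :\: V) x' = b * mu_on (W :\: V) x ->
  a * (mu_on V y * mu_on W y') = b * (mu_on V y' * mu_on W y).
Proof.
have sub_setC (U U' : {set 'I_n}) : U :\: U' \subset ~: U'.
  by rewrite setDE subsetIr.
move=> yy' xy x'y'.
rewrite (mu_on_eq (agree_on_sub (sub_setC _ _) x'y')).
rewrite (mu_on_eq (agree_on_sub (sub_setC _ _) xy)) => ab.
rewrite (mu_on_split V W y) (mu_on_split V W y') (mu_on_split W V y) (mu_on_split W V y').
rewrite (mu_on_eq (agree_on_sub (sub_setC V W) yy')) setIC.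
transitivity (a * mu_on (W :\: V) y' * (mu_on (W :&: V) y * mu_on (V :\: W) y' *
                                        mu_on (W :&: V) y')); first by ring.
by rewrite ab; ring.
Qed.

Lemma state_dist_succ t y : nu t.+1 y = (Bad y == set0)%:R * nu t y +
  \sum_(S : {set 'I_m}) \sum_(x | (Bad x != set0) && (Res x == S))
     nu t x * ((agree (~: vblS S) x y)%:R * mu_on (vblS S) y).
Proof.
rewrite /= (bigID (fun x => Bad x == set0)) /=; congr (_ + _).
  rewrite big_mkcond (bigD1 y) //= big1 => [|x xy]; last first.
    by rewrite /kernel; case: (Bad x == set0); rewrite // (negbTE xy) mulr0.
  by rewrite addr0 /kernel; case: (Bad y == set0); rewrite ?eqxx ?mulr1 ?mul1r ?mul0r.
rewrite (partition_big Res xpredT) //; apply: eq_bigr => S _.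
by apply: eq_bigr => x /andP[/negbTE bad /eqP <-]; rewrite /kernel bad.
Qed.

Lemma state_dist_exchange t W y y' : exchangeable W y y' ->
  nu t y * mu_on W y' = nu t y' * mu_on W y.
Proof.
elim: t W y y' => [|t IH] W y y' yy'.
  by rewrite /= !(mu_splitC W) (mu_on_eq yy'.1); ring.
rewrite !state_dist_succ !mulrDl -(exchangeable_Bad yy') -!mulrA IH //; congr (_ + _).
rewrite !mulr_suml; apply: eq_bigr => Rx _; rewrite !mulr_suml.
rewrite [RHS](reindex_inj (inv_inj (swap_offK (vblS Rx) y y'))).
rewrite big_mkcond [RHS]big_mkcond /=.
apply: eq_bigr => x _; set x' := swap_off _ _ _ x.
rewrite agree_swap_off; have [xy | _] := boolP (agree (~: vblS Rx) x y); last first.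
  by rewrite !(mul0r, mulr0, if_same).
have x'y' : agree (~: vblS Rx) x' y' by rewrite agree_swap_off.
rewrite -(resample_cond yy' xy (agree_swap_off_in _ _ _ _) x'y').
case: ifP => // /andP[_ /eqP RS]; subst Rx; rewrite !mul1r.
have [_ _ xx'] := resample_exchange yy' xy (agree_swap_off_in _ _ _ _) x'y'.
by rewrite -!mulrA; apply: mu_on_resample yy'.1 xy x'y' (IH _ _ _ xx').
Qed.

Lemma mu_on_setT z : mu_on setT z = mu z.
Proof. by rewrite (mu_splitC setT) setCT /mu_on big_set0 mulr1. Qed.

Lemma state_dist_good t y y' : Bad y = set0 -> Bad y' = set0 ->
  nu t y * mu y' = nu t y' * mu y.
Proof.
by move=> gy gy'; rewrite -!mu_on_setT; apply/state_dist_exchange/exchangeable_good.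
Qed.

Lemma state_dist_mu0 t y : mu y = 0 -> nu t y = 0.
Proof.
move/eqP/prodf_eq0 => [k _ /eqP pky]; elim: t y pky => [|t IH] y pky.
  by apply/eqP/prodf_eq0; exists k; rewrite ?pky.
rewrite /=; apply: big1 => x _; rewrite /kernel; case: (Bad x == set0).
  have [-> | _] := eqVneq x y; first by rewrite IH ?mul0r.
  by rewrite mulr0.
have [kV | kV] := boolP (k \in vblS (Res x)).
  by rewrite (bigD1 k) //= pky mul0r !mulr0.
have [/agree_onP xy | _] := boolP (agree (~: vblS (Res x)) x y); last first.
  by rewrite mul0r mulr0.
by rewrite IH ?mul0r // xy // inE.
Qed.

End PartialRejectionSampling.

Local Open Scope ring_scope.

Theorem theorem26 (R : realFieldType) (n m : nat) (D : 'I_n -> finType)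
  (p : forall k : 'I_n, D k -> R)
  (A : 'I_m -> {set assignment n D}) (vbl : 'I_m -> {set 'I_n})
  (p_ge0 : forall (k : 'I_n) (x : D k), 0 <= p k x)
  (p_sum1 : forall k : 'I_n, \sum_(x : D k) p k x = 1)
  (A_det : forall (i : 'I_m) (s t : assignment n D),
      (forall k, k \in vbl i -> s k = t k) -> (s \in A i) = (t \in A i)) :
  forall (t : nat) (s : assignment n D),
    (* LHS: probability that the algorithm has halted within t resampling
       rounds with output s; RHS: Pr[halted within t rounds] * mu(s | no A_i) *)
    (if good n m D A s then state_dist R n m D p A vbl t s else 0) =
    (\sum_(y | good n m D A y) state_dist R n m D p A vbl t y) *
    ((if good n m D A s then mu R n D p s else 0)
       / \sum_(y | good n m D A y) mu R n D p y).
Proof.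
move=> t s; rewrite /good; case: eqP => [gs | _]; last by rewrite mul0r mulr0.
have [Z0 | Z_neq0] := eqVneq (\sum_(y | Bad n m D A y == set0) mu R n D p y) 0.
  have mus0 : mu R n D p s = 0.
    by apply: (psumr_eq0P _ Z0) => [y _ | ]; rewrite ?gs ?prodr_ge0.
  by rewrite mus0 mul0r mulr0 (state_dist_mu0 _ _ _ mus0).
apply: (mulIf Z_neq0); rewrite mulrA divfK // mulr_sumr mulr_suml.
by apply: eq_bigr => y /eqP gy; apply: state_dist_good.
Qed.
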